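(* Let $a$ be a tile of an additive poset $A$ and let $I$ be the set of all atoms of $A$ lying in the tail $A_a$. Then the map $2^I_f\to A$, $J\mapsto\sum_{j\in J} j$, is an isomorphism of additive posets from the restricted additive powerset $2^I_f$ onto the additive subposet of $A_a$ generated by $I$ as a $\mathbb{Z}/2\mathbb{Z}$-vector space.
   Context: An additive poset is a pair $(A,\le)$ where $A$ is an abelian group and $\le$ is a partial order on $A$ such that for all $a,b,c\in A$: $(\ast)$ if $b\le a$ and $c\le a$ then $b+c\le a$; $(\ast\ast)$ if $a\le b$ and $a\le c$ then $a\le a+b+c$. Every subgroup with the restricted order is an additive poset (an additive subposet). An isomorphism of additive posets is a bijection that is both a group isomorphism and an order isomorphism. The tail of $a$ is $A_a=\{x:x\le a\}$. Elements $x,y$ are independent if $x\le x+y$. An atom is a nonzero $x$ with $A_x=\{0,x\}$. A tile is a nonzero $a$ such that any two distinct atoms of $A$ in $A_a$ are independent. For a set $I$, $2^I_f$ is the set of finite subsets of $I$ with symmetric difference as addition and inclusion as partial order. *)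

From HB Require Import structures.
From mathcomp Require Import all_boot all_order all_algebra.
Set Implicit Arguments. Unset Strict Implicit. Unset Printing Implicit Defensive.
Import GRing.Theory.
Local Open Scope ring_scope.

Definition additive_poset (A : zmodType) (le : A -> A -> Prop) : Prop :=
  [/\ (forall x, le x x),
      (forall x y, le x y -> le y x -> x = y),
      (forall x y z, le x y -> le y z -> le x z),
      (forall a b c : A, le b a -> le c a -> le (b + c) a)
    & (forall a b c : A, le a b -> le a c -> le a (a + b + c))].

Definition independent (A : zmodType) (le : A -> A -> Prop) (x y : A) : Prop :=
  le x (x + y).

Definition tail (A : zmodType) (le : A -> A -> Prop) (a : A) : A -> Prop :=
  fun x => le x a.

Definition atom (A : zmodType) (le : A -> A -> Prop) (x : A) : Prop :=
  x <> 0 /\ (forall y, le y x <-> (y = 0 \/ y = x)).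

Definition tile (A : zmodType) (le : A -> A -> Prop) (a : A) : Prop :=
  a <> 0 /\
  (forall x y, atom le x -> atom le y -> tail le a x -> tail le a y ->
     x <> y -> independent le x y).

(* subgroup generated by a set P (as a Z-module; the theorem asserts it is
   the Z/2Z-span) *)
Inductive gen_subgroup (A : zmodType) (P : A -> Prop) : A -> Prop :=
  | gen0 : gen_subgroup P 0
  | gen_in x : P x -> gen_subgroup P x
  | gen_sub x y : gen_subgroup P x -> gen_subgroup P y -> gen_subgroup P (x - y).

(* Finite subsets of I are represented by duplicate-free sequences of
   elements of I (two such are the same subset iff they are =i). *)
Definition finsubset (A : zmodType) (I : A -> Prop) (J : seq A) : Prop :=
  uniq J /\ (forall x, x \in J -> I x).

(* symmetric difference = addition in 2^I_f *)
Definition symdiff (A : eqType) (J K : seq A) : seq A :=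
  [seq x <- J | x \notin K] ++ [seq x <- K | x \notin J].

Definition sumset (A : zmodType) (J : seq A) : A := \sum_(j <- J) j.

(* In an additive poset every element has order two, so the sums of finite sets of
   elements of a fixed family form an elementary abelian 2-group and symmetric
   difference goes to addition. If the family consists of nonzero, pairwise
   independent elements, then independence passes to sums, so J ⊆ K gives
   sum J <= sum J + sum (K \ J) = sum K. Conversely, if sum J <= sum K and x ∈ J \ K,
   then x <= sum K and x <= x + sum K by independence, so the second axiom yields
   x <= 2x + 2 sum K = 0, forcing x = 0. Hence J ↦ sum J is an order embedding,
   in particular injective. The atoms below a tile form such a family, and they
   lie below the tile, as does everything they generate by the first axiom. *)
From mathcomp Require Import all_boot all_order all_algebra.
Import GRing.Theory.
Local Open Scope ring_scope.
Set Implicit Arguments. Unset Strict Implicit.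

Lemma sumset_filterC (A : zmodType) (s : seq A) (p : pred A) :
  sumset s = sumset [seq x <- s | p x] + sumset [seq x <- s | ~~ p x].
Proof. by rewrite /sumset !big_filter (bigID p). Qed.

Lemma sumset_subset (A : zmodType) (J K : seq A) :
  uniq J -> uniq K -> {subset J <= K} ->
  sumset K = sumset J + sumset [seq y <- K | y \notin J].
Proof.
move=> uJ uK JK; rewrite (sumset_filterC K (mem J)); congr (_ + _).
apply: perm_big; apply: uniq_perm => [||x]; rewrite ?filter_uniq //.
by rewrite mem_filter andb_idr //; apply: JK.
Qed.

Section AdditivePoset.

Variables (A : zmodType) (le : A -> A -> Prop).
Hypothesis hA : additive_poset le.

Lemma ap_refl x : le x x.
Proof. by case: hA => refl _ _ _ _; apply: refl. Qed.

Lemma ap_anti x y : le x y -> le y x -> x = y.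
Proof. by case: hA => _ anti _ _ _; apply: anti. Qed.

Lemma ap_trans x y z : le x y -> le y z -> le x z.
Proof. by case: hA => _ _ trans _ _; apply: trans. Qed.

Lemma ap_addl a b c : le b a -> le c a -> le (b + c) a.
Proof. by case: hA => _ _ _ addl _; apply: addl. Qed.

Lemma ap_addr a b c : le a b -> le a c -> le a (a + b + c).
Proof. by case: hA => _ _ _ _ addr; apply: addr. Qed.

Lemma ap_addxx (x : A) : x + x = 0.
Proof.
have le_3x_x : le (x + x + x) x.
  by rewrite -addrA; apply: ap_addl; [|apply: ap_addl]; apply: ap_refl.
have : x + x + x = x by apply: ap_anti => //; apply: ap_addr; apply: ap_refl.
by move/(congr1 (fun t => t - x)); rewrite addrK subrr.
Qed.

Lemma ap_oppr (x : A) : - x = x.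
Proof. by apply/eqP; rewrite eq_sym -subr_eq0 opprK ap_addxx. Qed.

Lemma ap_ge0 x : le 0 x.
Proof. by rewrite -(ap_addxx x); apply: ap_addl; apply: ap_refl. Qed.

Lemma independent_sym x y : independent le x y -> independent le y x.
Proof.
move=> ixy; have : le (x + (x + y)) (x + y) by apply: ap_addl => //; apply: ap_refl.
by rewrite addrA ap_addxx add0r addrC.
Qed.

Lemma independentD z x y :
  independent le z x -> independent le z y -> independent le z (x + y).
Proof.
move=> izx izy; have := ap_addr izx izy.
by rewrite /independent [z + (z + x)]addrA ap_addxx add0r addrCA.
Qed.

Lemma independent_sumset z s :
  (forall y, y \in s -> independent le z y) -> independent le z (sumset s).
Proof.
elim: s => [|y s IHs] indep.
  by rewrite /independent /sumset big_nil addr0; apply: ap_refl.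
rewrite /sumset big_cons; apply: independentD; first by apply: indep; rewrite mem_head.
by apply: IHs => w ws; apply: indep; rewrite inE ws orbT.
Qed.

Lemma independent_sumsets s t :
  (forall x y, x \in s -> y \in t -> independent le x y) ->
  independent le (sumset s) (sumset t).
Proof.
move=> indep; apply: independent_sym; apply: independent_sumset => x xs.
by apply: independent_sym; apply: independent_sumset => y yt; apply: indep.
Qed.

Lemma independent_le_eq0 x y : independent le x y -> le x y -> x = 0.
Proof.
move=> ixy lexy; apply: ap_anti; last exact: ap_ge0.
by have := ap_addr lexy ixy; rewrite ap_addxx.
Qed.

Lemma sumset_symdiff (J K : seq A) : uniq J -> uniq K ->
  sumset (symdiff J K) = sumset J + sumset K.
Proof.
move=> uJ uK; rewrite [LHS]big_cat -/(sumset _) -/(sumset _).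
rewrite (sumset_filterC J (mem K)) (sumset_filterC K (mem J)).
have -> : sumset [seq x <- J | x \in K] = sumset [seq x <- K | x \in J].
  apply: perm_big; apply: uniq_perm => [||x]; rewrite ?filter_uniq //.
  by rewrite !mem_filter andbC.
by rewrite addrACA ap_addxx add0r.
Qed.

Lemma gen_subgroupD (P : A -> Prop) x y :
  gen_subgroup P x -> gen_subgroup P y -> gen_subgroup P (x + y).
Proof. by move=> Px Py; rewrite -[y]ap_oppr; apply: gen_sub. Qed.

Lemma gen_subgroup_le (P : A -> Prop) a :
  (forall x, P x -> le x a) -> forall x, gen_subgroup P x -> le x a.
Proof.
move=> Pa x; elim=> [|y /Pa //|y z _ le_ya _ le_za]; first exact: ap_ge0.
by rewrite ap_oppr; apply: ap_addl.
Qed.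

Section Family.

Variable P : A -> Prop.

Lemma finsubset_cons x J : finsubset P (x :: J) -> P x /\ finsubset P J.
Proof.
case=> /andP[_ uJ] PJ; split; first by apply: PJ; rewrite mem_head.
by split=> // y yJ; apply: PJ; rewrite inE yJ orbT.
Qed.

Lemma finsubset_symdiff J K :
  finsubset P J -> finsubset P K -> finsubset P (symdiff J K).
Proof.
move=> [uJ PJ] [uK PK]; split.
  rewrite cat_uniq !filter_uniq //= andbT; apply/hasPn => x.
  by rewrite !mem_filter => /andP[xK _]; rewrite negb_and xK orbT.
by move=> x; rewrite mem_cat !mem_filter => /orP[/andP[_ /PJ]|/andP[_ /PK]].
Qed.

Lemma gen_subgroup_sumset J : finsubset P J -> gen_subgroup P (sumset J).
Proof.
elim: J => [|x J IHJ]; first by rewrite /sumset big_nil; constructor.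
case/finsubset_cons=> Px PJ; rewrite /sumset big_cons.
by apply: gen_subgroupD; [constructor | apply: IHJ].
Qed.

Lemma gen_subgroupP x :
  gen_subgroup P x -> exists J, finsubset P J /\ sumset J = x.
Proof.
elim=> [|y Py|y z _ [J [PJ <-]] _ [K [PK <-]]].
- by exists [::]; rewrite /sumset big_nil.
- exists [:: y]; rewrite /sumset big_seq1.
  by split=> //; split=> // w; rewrite inE => /eqP ->.
- exists (symdiff J K); split; first exact: finsubset_symdiff.
  by rewrite sumset_symdiff ?ap_oppr //; [case: PJ | case: PK].
Qed.

Hypothesis P_neq0 : forall x, P x -> x <> 0.
Hypothesis P_indep : forall x y, P x -> P y -> x <> y -> independent le x y.

Lemma sumset_le_subset J K :
  finsubset P J -> finsubset P K -> {subset J <= K} -> le (sumset J) (sumset K).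
Proof.
move=> [uJ PJ] [uK PK] JK; rewrite (sumset_subset uJ uK JK).
apply: independent_sumsets => x y xJ; rewrite mem_filter => /andP[yJ yK].
by apply: P_indep; [apply: PJ | apply: PK | move=> exy; rewrite -exy xJ in yJ].
Qed.

Lemma sumset_leP J K : finsubset P J -> finsubset P K ->
  le (sumset J) (sumset K) <-> {subset J <= K}.
Proof.
move=> PJ PK; split; last exact: sumset_le_subset.
move=> leJK x xJ; apply/negPn/negP => xK.
have Px : P x := PJ.2 x xJ.
have Px1 : finsubset P [:: x] by split=> // y; rewrite inE => /eqP ->.
have le_xJ : le x (sumset J).
  have : le (sumset [:: x]) (sumset J).
    by apply: sumset_le_subset => // y /[!inE] /eqP ->.
  by rewrite /sumset big_seq1.
apply: (P_neq0 Px); apply: (independent_le_eq0 _ (ap_trans le_xJ leJK)).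
apply: independent_sumset => y yK; apply: P_indep => //; first exact: PK.2.
by move=> exy; rewrite exy yK in xK.
Qed.

Lemma sumset_inj J K : finsubset P J -> finsubset P K ->
  sumset J = sumset K -> J =i K.
Proof.
move=> PJ PK eJK x; apply/idP/idP.
  by apply: (sumset_leP PJ PK).1; rewrite eJK; apply: ap_refl.
by apply: (sumset_leP PK PJ).1; rewrite eJK; apply: ap_refl.
Qed.

End Family.

End AdditivePoset.

Theorem theorem5p2 (A : zmodType) (le : A -> A -> Prop)
  (hA : additive_poset le) (a : A) (ha : tile le a) :
  let I := fun x => atom le x /\ tail le a x in
  let S := gen_subgroup I in
  (* S is a subset of A_a *)
  (forall x, S x -> tail le a x) /\
  (* the map lands in S *)
  (forall J, finsubset I J -> S (sumset J)) /\
  (* surjective onto S *)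
  (forall x, S x -> exists J, finsubset I J /\ sumset J = x) /\
  (* injective on finite subsets *)
  (forall J K, finsubset I J -> finsubset I K -> sumset J = sumset K -> J =i K) /\
  (* group homomorphism: symmetric difference to + *)
  (forall J K, finsubset I J -> finsubset I K ->
     sumset (symdiff J K) = sumset J + sumset K) /\
  (* order isomorphism: inclusion to le *)
  (forall J K, finsubset I J -> finsubset I K ->
     (le (sumset J) (sumset K) <-> {subset J <= K})).
Proof.
move=> I S.
have I_neq0 x : I x -> x <> 0 by move=> [[]].
have I_indep x y : I x -> I y -> x <> y -> independent le x y.
  by move=> [Ax ax] [Ay ay]; apply: ha.2.
split; first by apply: gen_subgroup_le => // x [].
split; first exact: (gen_subgroup_sumset hA).
split; first exact: (gen_subgroupP hA).
split; first exact: (sumset_inj hA I_neq0 I_indep).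
split; first by move=> J K [uJ _] [uK _]; exact: (sumset_symdiff hA).
exact: (sumset_leP hA I_neq0 I_indep).
Qed.
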